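(* The reduction relation $\to_{{\tt j}/{\tt o}}$ on $\lambda j$-terms is strongly normalizing (terminating).
   Context: $\lambda j$-terms are generated by $t,u::= x\mid \lambda x.t\mid t\,u\mid t[x/u]$; $\lambda x.t$ and $t[x/u]$ bind $x$ in $t$ (not in $u$), and terms are considered modulo $\alpha$-conversion. $\mathrm{fv}(t)$ is the set of free variables, $t\{x/u\}$ is capture-avoiding meta-level substitution, and $|t|_x$ is the number of free occurrences of $x$ in $t$. If $|t|_x=n\ge2$, $t_{[y]_x}$ denotes any term obtained from $t$ by replacing $k$ of the free occurrences of $x$ by a fresh variable $y$, for some $1\le k\le n-1$. $\to_{\tt j}$ is the closure under all contexts of: $({\tt w})$ $t[x/u]\to t$ if $|t|_x=0$; $({\tt d})$ $t[x/u]\to t\{x/u\}$ if $|t|_x=1$; $({\tt c})$ $t[x/u]\to t_{[y]_x}[x/u][y/u]$ if $|t|_x\ge2$, $y$ fresh. $\equiv_{\tt o}$ is the smallest equivalence closed under contexts containing $t[x/s][y/v]\sim t[y/v][x/s]$ if $x\notin\mathrm{fv}(v)$ and $y\notin\mathrm{fv}(s)$; $\lambda y.(t[x/s])\sim(\lambda y.t)[x/s]$ if $y\notin\mathrm{fv}(s)$; and $t[x/s]\,v\sim(t\,v)[x/s]$ if $x\notin\mathrm{fv}(v)$. $t\to_{{\tt j}/{\tt o}}u$ iff $t\equiv_{\tt o}t'\to_{\tt j}u'\equiv_{\tt o}u$ for some $t',u'$. *)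

(* lambda-j terms in de Bruijn representation (terms modulo
   alpha-conversion). *)
From Stdlib Require Import Arith Relations.

Inductive term : Type :=
| Var : nat -> term
| Lam : term -> term
| App : term -> term -> term
| Sub : term -> term -> term.   (* Sub t u = t[x/u] : binds index 0 in t, not in u *)

Fixpoint lift (d : nat) (t : term) : term :=
  match t with
  | Var n => if n <? d then Var n else Var (S n)
  | Lam t => Lam (lift (S d) t)
  | App t u => App (lift d t) (lift d u)
  | Sub t u => Sub (lift (S d) t) (lift d u)
  end.

Fixpoint swap (d : nat) (t : term) : term :=
  match t with
  | Var n => if n =? d then Var (S d) else if n =? S d then Var d else Var n
  | Lam t => Lam (swap (S d) t)
  | App t u => App (swap d t) (swap d u)
  | Sub t u => Sub (swap (S d) t) (swap d u)
  end.

(* capture-avoiding meta substitution: subst k u t = t{k/u},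
   indices above k are decremented (the binder of k disappears) *)
Fixpoint subst (k : nat) (u : term) (t : term) : term :=
  match t with
  | Var n => if n <? k then Var n else if n =? k then u else Var (pred n)
  | Lam t => Lam (subst (S k) (lift 0 u) t)
  | App t1 t2 => App (subst k u t1) (subst k u t2)
  | Sub t1 t2 => Sub (subst (S k) (lift 0 u) t1) (subst k u t2)
  end.

Fixpoint occ (k : nat) (t : term) : nat :=
  match t with
  | Var n => if n =? k then 1 else 0
  | Lam t => occ (S k) t
  | App t u => occ k t + occ k u
  | Sub t u => occ (S k) t + occ k u
  end.

(* split d t t' : t' is obtained from t by inserting a fresh binder position
   at d+1 (free indices > d are shifted) and renaming SOME occurrences of the
   free index d into the fresh index d+1.  Together with side conditions on
   the counts this represents t_{[y]_x}. *)
Inductive split : nat -> term -> term -> Prop :=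
| split_keep : forall d, split d (Var d) (Var d)
| split_ren  : forall d, split d (Var d) (Var (S d))
| split_lt   : forall d n, n < d -> split d (Var n) (Var n)
| split_gt   : forall d n, d < n -> split d (Var n) (Var (S n))
| split_lam  : forall d t t', split (S d) t t' -> split d (Lam t) (Lam t')
| split_app  : forall d t t' u u', split d t t' -> split d u u' ->
                 split d (App t u) (App t' u')
| split_sub  : forall d t t' u u', split (S d) t t' -> split d u u' ->
                 split d (Sub t u) (Sub t' u').

Inductive j_root : term -> term -> Prop :=
| j_w : forall t u, occ 0 t = 0 -> j_root (Sub t u) (subst 0 u t)
| j_d : forall t u, occ 0 t = 1 -> j_root (Sub t u) (subst 0 u t)
| j_c : forall t t' u, 2 <= occ 0 t -> split 0 t t' ->
          1 <= occ 0 t' -> 1 <= occ 1 t' ->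
          (* t'[x/u][y/u] : inner Sub binds x (index 0), outer binds y (index 1) *)
          j_root (Sub t u) (Sub (Sub t' (lift 0 u)) u).

Inductive o_root : term -> term -> Prop :=
| o_ss : forall t s v,   (* t[x/s][y/v] ~ t[y/v][x/s], y notin fv(s) *)
    o_root (Sub (Sub t (lift 0 s)) v) (Sub (Sub (swap 0 t) (lift 0 v)) s)
| o_ls : forall t s,     (* \y.(t[x/s]) ~ (\y.t)[x/s], y notin fv(s) *)
    o_root (Lam (Sub t (lift 0 s))) (Sub (Lam (swap 0 t)) s)
| o_as : forall t s v,   (* t[x/s] v ~ (t v)[x/s], x notin fv(v) *)
    o_root (App (Sub t s) v) (Sub (App t (lift 0 v)) s).

Inductive ctx (R : term -> term -> Prop) : term -> term -> Prop :=
| ctx_root : forall t u, R t u -> ctx R t u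
| ctx_lam  : forall t u, ctx R t u -> ctx R (Lam t) (Lam u)
| ctx_appl : forall t u v, ctx R t u -> ctx R (App t v) (App u v)
| ctx_appr : forall t u v, ctx R t u -> ctx R (App v t) (App v u)
| ctx_subl : forall t u v, ctx R t u -> ctx R (Sub t v) (Sub u v)
| ctx_subr : forall t u v, ctx R t u -> ctx R (Sub v t) (Sub v u).

Definition j_step : relation term := ctx j_root.

Definition o_equiv : relation term := clos_refl_sym_trans term (ctx o_root).

Definition jo_step (t u : term) : Prop :=
  exists t' u', o_equiv t t' /\ j_step t' u' /\ o_equiv u' u.

Definition strongly_normalizing (R : relation term) : Prop :=
  well_founded (fun u t => R t u).

From Stdlib Require Import Arith Lia Relations Wellfounded.

(* [mult k t] counts the free occurrences of the index k in t, where an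
   occurrence inside the argument u of an explicit substitution t[x/u] is
   counted max(1, |t|_x) times: the number of copies of u that the
   substitution will eventually produce.  [weight t] adds, for every explicit
   substitution t[x/u] with n = mult 0 t, the cost n*n + 1, again counting
   the weight of u once per copy.
   1. Both measures commute with the de Bruijn operations lift, swap, subst
      and split (the combinatorial lemmas of the first part of the file).
   2. Both are invariant under the root axioms of ~, hence under ==o, since
      "having the same measures" is a context-closed equivalence.
   3. A root j-step never increases [mult] and strictly decreases [weight]
      (duplication c splits n = a + b with a, b >= 1, and
      a*a + b*b + 2 < n*n + 1); both facts are preserved by contexts.
   Hence every ->j/o step strictly decreases [weight], which is well founded. *)

Fixpoint mult (k : nat) (t : term) : nat :=
  match t with
  | Var n => if n =? k then 1 else 0
  | Lam t => mult (S k) t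
  | App t u => mult k t + mult k u
  | Sub t u => mult (S k) t + Nat.max 1 (mult 0 t) * mult k u
  end.

Fixpoint weight (t : term) : nat :=
  match t with
  | Var _ => 0
  | Lam t => weight t
  | App t u => weight t + weight u
  | Sub t u => weight t + Nat.max 1 (mult 0 t) * weight u
               + mult 0 t * mult 0 t + 1
  end.

Ltac index_cases :=
  repeat (cbn -[Nat.eqb Nat.ltb Nat.max] in *; match goal with
  | |- context[?a =? ?b] => destruct (Nat.eqb_spec a b)
  | |- context[?a <? ?b] => destruct (Nat.ltb_spec a b)
  | H : context[?a =? ?b] |- _ => destruct (Nat.eqb_spec a b)
  | H : context[?a <? ?b] |- _ => destruct (Nat.ltb_spec a b)
  end); cbn -[Nat.eqb Nat.ltb Nat.max] in *; try lia.

Lemma le_mul_max1 (a x : nat) : x <= Nat.max 1 a * x.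
Proof. destruct a; cbn; lia. Qed.

Lemma mult_lift_below (t : term) : forall d k, k < d -> mult k (lift d t) = mult k t.
Proof.
  induction t; intros d k Hk; cbn -[Nat.eqb Nat.ltb Nat.max].
  - index_cases.
  - apply IHt; lia.
  - rewrite IHt1, IHt2; auto.
  - rewrite IHt1, IHt2, (IHt1 (S d) 0); auto; lia.
Qed.

Lemma mult_lift_above (t : term) : forall d k, d <= k -> mult (S k) (lift d t) = mult k t.
Proof.
  induction t; intros d k Hk; cbn -[Nat.eqb Nat.ltb Nat.max].
  - index_cases.
  - apply IHt; lia.
  - rewrite IHt1, IHt2; auto.
  - rewrite IHt1, IHt2, mult_lift_below; auto; lia.
Qed.

Lemma mult_lift_fresh (t : term) : forall d, mult d (lift d t) = 0.
Proof.
  induction t; intros d; cbn -[Nat.eqb Nat.ltb Nat.max].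
  - index_cases.
  - apply IHt.
  - rewrite IHt1, IHt2; auto.
  - rewrite IHt1, IHt2; lia.
Qed.

Lemma weight_lift (t : term) : forall d, weight (lift d t) = weight t.
Proof.
  induction t; intros d; cbn -[Nat.eqb Nat.ltb Nat.max]; auto.
  - index_cases.
  - rewrite IHt1, IHt2, mult_lift_below; auto; lia.
Qed.

Definition swap_index (d k : nat) : nat :=
  if k =? d then S d else if k =? S d then d else k.

Lemma mult_swap (t : term) : forall d k, mult k (swap d t) = mult (swap_index d k) t.
Proof.
  unfold swap_index.
  induction t; intros d k; cbn -[Nat.eqb Nat.ltb Nat.max].
  - index_cases.
  - rewrite IHt; f_equal; index_cases.
  - rewrite IHt1, IHt2; auto.
  - rewrite IHt1, IHt2, IHt1; repeat f_equal; index_cases.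
Qed.

Lemma weight_swap (t : term) : forall d, weight (swap d t) = weight t.
Proof.
  induction t; intros d; cbn -[Nat.eqb Nat.ltb Nat.max]; auto.
  - index_cases.
  - rewrite IHt1, IHt2, mult_swap.
    replace (swap_index (S d) 0) with 0 by (unfold swap_index; index_cases).
    reflexivity.
Qed.

Lemma mult_subst (t : term) : forall j u k,
  mult k (subst j u t) = (if k <? j then mult k t else mult (S k) t) + mult j t * mult k u.
Proof.
  induction t; intros j u k; cbn -[Nat.eqb Nat.ltb Nat.max].
  - index_cases.
  - rewrite IHt, mult_lift_above by lia. index_cases.
  - rewrite IHt1, IHt2. index_cases; ring.
  - rewrite IHt1, IHt2, IHt1, mult_lift_above, mult_lift_fresh by lia.
    cbn -[Nat.eqb Nat.ltb Nat.max]. rewrite Nat.mul_0_r, Nat.add_0_r.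
    index_cases; ring.
Qed.

Lemma weight_subst (t : term) : forall j u,
  weight (subst j u t) = weight t + mult j t * weight u.
Proof.
  induction t; intros j u; cbn -[Nat.eqb Nat.ltb Nat.max].
  - index_cases.
  - rewrite IHt, weight_lift; auto.
  - rewrite IHt1, IHt2. ring.
  - rewrite IHt1, IHt2, mult_subst, mult_lift_fresh, weight_lift.
    change (0 <? S j) with true; cbn iota.
    rewrite !Nat.mul_0_r, !Nat.add_0_r. ring.
Qed.

Lemma split_measures d t t' : split d t t' ->
  (forall k, k < d -> mult k t' = mult k t) /\
  (forall k, d < k -> mult (S k) t' = mult k t) /\
  mult d t' + mult (S d) t' = mult d t /\
  weight t' = weight t.
Proof.
  induction 1 as [| | | |d t t' _ IH|d t t' u u' _ IHt _ IHu|d t t' u u' _ IHt _ IHu];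
    cbn -[Nat.eqb Nat.ltb Nat.max]; try (repeat split; intros; index_cases; fail).
  - destruct IH as (Hlt & Hgt & Hd & Hw).
    repeat split; intros; auto; [apply Hlt | apply Hgt]; lia.
  - destruct IHt as (Hlt & Hgt & Hd & Hw), IHu as (Hlt' & Hgt' & Hd' & Hw').
    repeat split; intros; [rewrite Hlt, Hlt' | rewrite Hgt, Hgt' | lia | lia]; auto.
  - destruct IHt as (Hlt & Hgt & Hd & Hw), IHu as (Hlt' & Hgt' & Hd' & Hw').
    assert (H0 : mult 0 t' = mult 0 t) by (apply Hlt; lia).
    repeat split; intros.
    + rewrite Hlt, Hlt', H0 by lia; auto.
    + rewrite Hgt, Hgt', H0 by lia; auto.
    + rewrite H0, <- Hd', <- Hd. ring.
    + rewrite Hw, Hw', H0; auto.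
Qed.

Lemma occ_le_mult (t : term) : forall k, occ k t <= mult k t.
Proof.
  induction t; intros k; cbn -[Nat.eqb Nat.ltb Nat.max].
  - index_cases.
  - apply IHt.
  - specialize (IHt1 k); specialize (IHt2 k); lia.
  - specialize (IHt1 (S k)); specialize (IHt2 k).
    pose proof (le_mul_max1 (mult 0 t1) (mult k t2)); lia.
Qed.

Lemma mult_occ0 (t : term) : forall k, occ k t = 0 -> mult k t = 0.
Proof.
  induction t; intros k H; cbn -[Nat.eqb Nat.ltb Nat.max] in *.
  - index_cases.
  - auto.
  - rewrite IHt1, IHt2; lia.
  - rewrite IHt1, IHt2; lia.
Qed.

Definition context_closed (E : relation term) : Prop :=
  (forall t u, E t u -> E (Lam t) (Lam u)) /\
  (forall t u v, E t u -> E (App t v) (App u v)) /\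
  (forall t u v, E t u -> E (App v t) (App v u)) /\
  (forall t u v, E t u -> E (Sub t v) (Sub u v)) /\
  (forall t u v, E t u -> E (Sub v t) (Sub v u)).

Lemma ctx_least (R E : relation term) :
  inclusion term R E -> context_closed E -> inclusion term (ctx R) E.
Proof.
  intros HRE (Hlam & Happl & Happr & Hsubl & Hsubr) t u H.
  induction H; auto.
Qed.

Lemma clos_rst_least (R E : relation term) :
  inclusion term R E -> equivalence term E ->
  inclusion term (clos_refl_sym_trans term R) E.
Proof.
  intros HRE [Hrefl Htrans Hsym] t u H.
  induction H; eauto.
Qed.

Definition same_measures (t u : term) : Prop :=
  (forall k, mult k t = mult k u) /\ weight t = weight u.

Lemma same_measures_equivalence : equivalence term same_measures.
Proof.
  unfold same_measures; split.
  - intros t; split; auto.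
  - intros t u v [Hm Hw] [Hm' Hw']; split; [intros k; rewrite Hm; auto | lia].
  - intros t u [Hm Hw]; split; auto.
Qed.

Lemma same_measures_context_closed : context_closed same_measures.
Proof.
  unfold context_closed, same_measures.
  split; [| split; [| split; [| split]]]; intros t u; [| intros v ..];
    intros [Hm Hw]; split; cbn -[Nat.max]; intros; rewrite ?Hm, ?Hw; auto.
Qed.

(* Each axiom only moves a substitution past a binder its argument does not
   mention (the lifted argument), so no multiplicity or copy count changes. *)
Lemma o_root_same_measures : inclusion term o_root same_measures.
Proof.
  unfold same_measures; intros t u H; destruct H; cbn -[Nat.eqb Nat.ltb Nat.max];
  split; intros;
  repeat rewrite ?mult_swap, ?weight_swap, ?mult_lift_fresh, ?weight_lift,
         ?(mult_lift_above _ 0) by lia;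
  unfold swap_index; cbn -[Nat.max]; rewrite ?Nat.mul_0_r, ?Nat.add_0_r; ring.
Qed.

Lemma o_equiv_same_measures : inclusion term o_equiv same_measures.
Proof.
  apply clos_rst_least; [| exact same_measures_equivalence].
  apply ctx_least; [exact o_root_same_measures | exact same_measures_context_closed].
Qed.

Definition decreases (t u : term) : Prop :=
  (forall k, mult k u <= mult k t) /\ weight u < weight t.

Lemma j_root_decreases : inclusion term j_root decreases.
Proof.
  unfold decreases; intros t0 u0 H; destruct H as [t u Hocc|t u Hocc|t t' u Hocc Hsplit Hx Hy];
    cbn -[Nat.eqb Nat.ltb Nat.max].
  - (* w: the argument is erased *)
    apply mult_occ0 in Hocc. rewrite Hocc. split; intros.
    + rewrite mult_subst, Hocc. change (k <? 0) with false. cbn -[Nat.max]. lia.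
    + rewrite weight_subst, Hocc. cbn -[Nat.eqb Nat.ltb Nat.max]. lia.
  - (* d: the argument is used linearly *)
    pose proof (occ_le_mult t 0) as Hm. rewrite Hocc in Hm.
    replace (Nat.max 1 (mult 0 t)) with (mult 0 t) by lia. split; intros.
    + rewrite mult_subst. change (k <? 0) with false. cbn -[Nat.max]. lia.
    + rewrite weight_subst. nia.
  - (* c: the occurrences n = a + b are shared between two substitutions *)
    destruct (split_measures _ _ _ Hsplit) as (_ & Hgt & Hshare & Hw).
    pose proof (occ_le_mult t' 0). pose proof (occ_le_mult t' 1).
    rewrite mult_lift_fresh, weight_lift, Nat.mul_0_r, Nat.add_0_r.
    replace (Nat.max 1 (mult 0 t)) with (mult 0 t) by lia.
    replace (Nat.max 1 (mult 0 t')) with (mult 0 t') by lia.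
    replace (Nat.max 1 (mult 1 t')) with (mult 1 t') by lia.
    split; intros.
    + rewrite mult_lift_above, Hgt by lia. rewrite <- Hshare. lia.
    + rewrite Hw, <- Hshare. nia.
Qed.

(* Contexts preserve the decrease: in t[x/u] a smaller body multiplicity
   never increases the number of copies of u. *)
Lemma decreases_context_closed : context_closed decreases.
Proof.
  unfold context_closed, decreases.
  split; [| split; [| split; [| split]]]; intros t u; [| intros v ..];
    intros [Hm Hw]; split; cbn -[Nat.eqb Nat.ltb Nat.max]; auto;
    try (intros k; specialize (Hm k); lia); try lia.
  -
    assert (Hcopies : Nat.max 1 (mult 0 u) <= Nat.max 1 (mult 0 t)) by (specialize (Hm 0); lia).
    intros k. pose proof (Hm (S k)). pose proof (Nat.mul_le_mono_r _ _ (mult k v) Hcopies). lia.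
  - assert (Hcopies : Nat.max 1 (mult 0 u) <= Nat.max 1 (mult 0 t)) by (specialize (Hm 0); lia).
    pose proof (Nat.mul_le_mono_r _ _ (weight v) Hcopies).
    pose proof (Nat.mul_le_mono _ _ _ _ (Hm 0) (Hm 0)). lia.
  -
    intros k. pose proof (Nat.mul_le_mono_l _ _ (Nat.max 1 (mult 0 v)) (Hm k)). lia.
  - pose proof (proj1 (Nat.mul_lt_mono_pos_l (Nat.max 1 (mult 0 v)) _ _ ltac:(lia)) Hw). lia.
Qed.

Lemma j_step_decreases : inclusion term j_step decreases.
Proof. exact (ctx_least _ _ j_root_decreases decreases_context_closed). Qed.

Theorem lemma26 : strongly_normalizing jo_step.
Proof.
  unfold strongly_normalizing.
  apply (wf_incl _ _ (fun u t => weight u < weight t)).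
  - intros u t (t' & u' & Ho1 & Hj & Ho2).
    destruct (o_equiv_same_measures _ _ Ho1) as [_ Hw1].
    destruct (j_step_decreases _ _ Hj) as [_ Hw].
    destruct (o_equiv_same_measures _ _ Ho2) as [_ Hw2].
    lia.
  - exact (wf_inverse_image _ _ lt weight lt_wf).
Qed.
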